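(* Let $\tau$ be a primitive substitution. Then: (i) every generator of length one is basic; (ii) a generator $(v,ab,w)$ with $v,w\in\mathcal{A}^+$, $a,b\in\mathcal{A}$ is basic if and only if $\tau(a)=va$ and $\tau(b)=bw$; (iii) no generator of length three or more is basic.
   Context: Let $\mathcal{A}$ be a finite nonempty alphabet, $\mathcal{A}^*$ the finite words over $\mathcal{A}$ (including the empty word), $\mathcal{A}^+$ the nonempty words, $|u|$ the length of $u$. A word $u$ is a factor of $v$ if $v=w_1uw_2$ for some words $w_1,w_2$. A substitution is a map $\tau:\mathcal{A}\to\mathcal{A}^+$ extended to a concatenation-respecting map on words. The language $\mathcal{L}(\tau)$ is the set of words that are factors of $\tau^n(a)$ for some letter $a$ and some $n\ge1$. $\tau$ is primitive if there is $n\ge1$ such that every letter $b$ is a factor of $\tau^n(a)$ for every letter $a$, and there is a letter $a$ such that for every $N$ there is $n$ with $|\tau^n(a)|>N$. A generator for $\tau$ is a triple $(v,u,w)$ with $v,u,w\in\mathcal{A}^+$, $u\in\mathcal{L}(\tau)$ and $\tau(u)=vuw$; $v$, $u$, $w$ are its left wing, center and right wing, and its length is $|u|$. If $(v,u,cw)$ is a generator with $c\in\mathcal{A}$, $w\in\mathcal{A}^*$, its right extension is the generator $(v,uc,w\tau(c))$; if $(vc,u,w)$ is a generator with $c\in\mathcal{A}$, $v\in\mathcal{A}^*$, its left extension is the generator $(\tau(c)v,cu,w)$. Two generators $g_1,g_2$ are G related ($g_1\sim_G g_2$) if there is a generator $g_3$ obtainable from $g_1$ and also from $g_2$ by finite (possibly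 empty) sequences of left and right extensions. A generator is basic if it is not G related to any generator of smaller length. *)

From mathcomp Require Import all_boot.
Set Implicit Arguments. Unset Strict Implicit. Unset Printing Implicit Defensive.

Section Subst.
Variable A : finType.

Definition factor (u v : seq A) : Prop := exists w1 w2, v = w1 ++ u ++ w2.

Definition is_substitution (tau : A -> seq A) : Prop := forall a, tau a <> [::].

Definition subst (tau : A -> seq A) (u : seq A) : seq A := flatten (map tau u).

Definition language (tau : A -> seq A) (u : seq A) : Prop :=
  exists (a : A) (n : nat), 1 <= n /\ factor u (iter n (subst tau) [:: a]).

Definition primitive (tau : A -> seq A) : Prop :=
  (exists n, 1 <= n /\ forall a b : A, factor [:: b] (iter n (subst tau) [:: a])) /\
  (exists a : A, forall N : nat, exists n, N < size (iter n (subst tau) [:: a])).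

Definition triple := (seq A * seq A * seq A)%type.
Definition lwing (g : triple) := g.1.1.
Definition center (g : triple) := g.1.2.
Definition rwing (g : triple) := g.2.

Definition generator (tau : A -> seq A) (g : triple) : Prop :=
  lwing g <> [::] /\ center g <> [::] /\ rwing g <> [::] /\
  language tau (center g) /\
  subst tau (center g) = lwing g ++ center g ++ rwing g.

Definition right_ext (tau : A -> seq A) (g g' : triple) : Prop :=
  exists v u w (c : A), g = (v, u, c :: w) /\ g' = (v, rcons u c, w ++ tau c).

Definition left_ext (tau : A -> seq A) (g g' : triple) : Prop :=
  exists v u w (c : A), g = (rcons v c, u, w) /\ g' = (tau c ++ v, c :: u, w).

Inductive ext_reach (tau : A -> seq A) : triple -> triple -> Prop :=
| ext_refl g : ext_reach tau g g
| ext_stepR g g' g'' : right_ext tau g g' -> ext_reach tau g' g'' -> ext_reach tau g g''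
| ext_stepL g g' g'' : left_ext tau g g' -> ext_reach tau g' g'' -> ext_reach tau g g''.

Definition G_related (tau : A -> seq A) (g1 g2 : triple) : Prop :=
  exists g3, generator tau g3 /\ ext_reach tau g1 g3 /\ ext_reach tau g2 g3.

Definition basic (tau : A -> seq A) (g : triple) : Prop :=
  generator tau g /\
  ~ (exists g', generator tau g' /\ G_related tau g g' /\
                size (center g') < size (center g)).

End Subst.

From mathcomp Require Import all_boot zify.
Set Implicit Arguments. Unset Strict Implicit. Unset Printing Implicit Defensive.

(* If the image [tau x] of the first letter of the center of a generator
   [(v, x u, w)] does not overhang the left wing, i.e. [v = tau x Z], then
   [(Z x, u, w)] is a shorter generator whose left extension is the given one;
   symmetrically on the right.  Hence in a basic generator [(v, x m y, w)] we
   have [tau x = v x Z] and [tau y = Y y w], and comparing with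
   [tau (x m y) = v x m y w] gives [m = Z tau(m) Y].  Since [tau] does not
   shrink words, [Z] and [Y] are empty: this settles the length-two case, and
   for longer centers [tau] would fix a letter, which primitivity forbids.
   Conversely, when [tau a = v a] and [tau b = b w], every generator reached
   from [(v, ab, w)] keeps a synchronization point between the images of [a]
   and [b], which a center letter of a length-one generator can never sit
   across. *)

Section SeqCat.
Variable T : eqType.
Implicit Types (c : T) (s p : seq T).

Lemma catsI s : injective (cat s).
Proof. by move=> x y /eqP; rewrite eqseq_cat // eqxx => /eqP. Qed.

Lemma catIs s : injective (cat^~ s).
Proof. by move=> x y /(congr1 rev); rewrite !rev_cat => /catsI /(can_inj revK). Qed.

Lemma cat_eq_cat_cons s1 s2 p c s : s1 ++ s2 = p ++ c :: s ->
  (exists Z, s1 = p ++ c :: Z /\ s = Z ++ s2) \/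
  (exists Z, s2 = Z ++ c :: s /\ p = s1 ++ Z).
Proof.
elim: s1 p => [|x s1 IH] [|y p] /=.
- by move=> ->; right; exists [::].
- by move=> ->; right; exists (y :: p).
- by case=> -> <-; left; exists s1.
- case=> -> /IH [[Z [-> ->]]|[Z [-> ->]]]; [left | right]; by exists Z.
Qed.

End SeqCat.

Section Generators.
Variables (A : finType) (tau : A -> seq A).
Hypothesis htau : is_substitution tau.
Implicit Types (c x y : A) (s p m u v w Z Y : seq A) (g : triple A).

Lemma subst_cat s1 s2 : subst tau (s1 ++ s2) = subst tau s1 ++ subst tau s2.
Proof. by rewrite /subst map_cat flatten_cat. Qed.

Lemma subst_cons c s : subst tau (c :: s) = tau c ++ subst tau s.
Proof. by []. Qed.

Lemma subst1 c : subst tau [:: c] = tau c.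
Proof. by rewrite /subst /= cats0. Qed.

Lemma size_tau c : 0 < size (tau c).
Proof. by rewrite lt0n size_eq0; apply/eqP. Qed.

Lemma size_subst s : size s <= size (subst tau s).
Proof. by elim: s => //= c s IH; rewrite subst_cons size_cat; have := size_tau c; lia. Qed.

Lemma subst_infix_self_wings Z m Y : m = Z ++ subst tau m ++ Y ->
  Z = [::] /\ Y = [::].
Proof.
move=> /(congr1 size); rewrite !size_cat; have := size_subst m => Hm Hsz.
by split; apply/nilP; rewrite /nilp; lia.
Qed.

Lemma subst_fixed_head c m : subst tau (c :: m) = c :: m -> tau c = [:: c].
Proof.
rewrite subst_cons => E.
have Hsz : size (tau c) = 1.
  by have := size_subst m; move/(congr1 size): E; rewrite size_cat /=; have := size_tau c; lia.
by move: E; case: (tau c) Hsz => [|d [|? ?]] //= _ [-> _].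
Qed.

Lemma primitive_no_fixed_letter c : primitive tau -> tau c <> [:: c].
Proof.
move=> [[n [_ Hocc]] [a Hgrow]] Hc.
have Hiter k : iter k (subst tau) [:: c] = [:: c] by elim: k => //= k ->; rewrite subst1.
have Ha : a = c.
  have [w1 [w2]] := Hocc c a; rewrite Hiter => E.
  have : a \in [:: c] by rewrite E !mem_cat mem_seq1 eqxx orbT.
  by rewrite mem_seq1 => /eqP.
by have [k] := Hgrow 1; rewrite Ha Hiter.
Qed.

Lemma language_factor u u' : language tau u -> factor u' u -> language tau u'.
Proof.
move=> [a [n [Hn [w1 [w2 E]]]]] [x1 [x2 Eu]]; exists a, n; split=> //.
by exists (w1 ++ x1), (x2 ++ w2); rewrite E Eu -!catA.
Qed.

Lemma not_basic_of_reach g g' : generator tau g' -> ext_reach tau g' g ->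
  size (center g') < size (center g) -> ~ basic tau g.
Proof.
move=> Hg' Hr Hs [Hg []]; exists g'; split=> //; split=> //.
by exists g; do !split=> //; exact: ext_refl.
Qed.

Lemma generator_left_contract Z x u w : u <> [::] ->
  generator tau (tau x ++ Z, x :: u, w) -> generator tau (rcons Z x, u, w).
Proof.
move=> Hu [_ [_ [Hw [Hl He]]]]; do !split=> //=; first by case: (Z).
- by apply: (language_factor Hl); exists [:: x], [::]; rewrite cats0.
- move: He; rewrite subst_cons /lwing /center /rwing /= -!catA => /catsI ->.
  by rewrite -cats1 -catA.
Qed.

Lemma generator_right_contract v u y Z : u <> [::] ->
  generator tau (v, rcons u y, Z ++ tau y) -> generator tau (v, u, y :: Z).
Proof.
move=> Hu [Hv [_ [_ [Hl He]]]]; do !split=> //=.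
- by apply: (language_factor Hl); exists [::], [:: y]; rewrite cats1.
- move: He; rewrite /lwing /center /rwing -cats1 subst_cat subst1 /= !catA => /catIs ->.
  by rewrite -!catA.
Qed.

Lemma basic_tau_head v x u w : u <> [::] -> basic tau (v, x :: u, w) ->
  exists Z, tau x = v ++ x :: Z.
Proof.
move=> Hu Hb; have Hg := Hb.1; have [_ [_ [_ [_ He]]]] := Hg.
rewrite subst_cons /lwing /center /rwing /= in He.
case: (cat_eq_cat_cons He) => [[Z [-> _]]|[Z [_ Ev]]]; first by exists Z.
have Hg' : generator tau (rcons Z x, u, w).
  by apply: generator_left_contract Hu _; rewrite -Ev.
have Hr : ext_reach tau (rcons Z x, u, w) (v, x :: u, w).
  by apply: ext_stepL (ext_refl _ _); exists Z, u, w, x; rewrite Ev.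
by case: (not_basic_of_reach Hg' Hr _ Hb).
Qed.

Lemma basic_tau_last v u y w : u <> [::] -> basic tau (v, rcons u y, w) ->
  exists Y, tau y = Y ++ y :: w.
Proof.
move=> Hu Hb; have Hg := Hb.1; have [_ [_ [_ [_ He]]]] := Hg.
move: He; rewrite /lwing /center /rwing /= -cats1 subst_cat subst1 -!catA cat1s catA.
case/cat_eq_cat_cons => [[Z [_ Ew]]|[Y [-> _]]]; last by exists Y.
have Hg' : generator tau (v, u, y :: Z).
  by apply: generator_right_contract Hu _; rewrite -Ew.
have Hr : ext_reach tau (v, u, y :: Z) (v, rcons u y, w).
  by apply: ext_stepR (ext_refl _ _); exists v, u, Z, y; rewrite Ew.
by case: (not_basic_of_reach Hg' Hr _ Hb); rewrite /= size_rcons.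
Qed.

Lemma basic_tau_ends v x m y w : basic tau (v, x :: rcons m y, w) ->
  exists Z Y, [/\ tau x = v ++ x :: Z, tau y = Y ++ y :: w &
                  m = Z ++ subst tau m ++ Y].
Proof.
move=> Hb; have Hmy : rcons m y <> [::] by case: (m).
have Hxm : x :: m <> [::] by [].
have [Z EZ] := basic_tau_head Hmy Hb.
have [Y EY] := basic_tau_last Hxm Hb.
exists Z, Y; split=> //.
have [_ [_ [_ [_ He]]]] := Hb.1.
move: He; rewrite /lwing /center /rwing /= subst_cons EZ -cats1 subst_cat subst1 EY.
rewrite -!catA => /catsI [] E.
by apply: (catIs (s := y :: w)); rewrite -!catA E.
Qed.

Lemma ext_reach_frame g h : ext_reach tau g h ->
  exists p s, [/\ center h = p ++ center g ++ s,
                  lwing h ++ p = subst tau p ++ lwing g &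
                  s ++ rwing h = rwing g ++ subst tau s].
Proof.
elim=> {g h} [g | g g' g'' [v [u [w [c [-> ->]]]]] _ [p [s [Hc Hl Hr]]]
               | g g' g'' [v [u [w [c [-> ->]]]]] _ [p [s [Hc Hl Hr]]]].
- by exists [::], [::]; rewrite !cats0.
- exists p, (c :: s); split=> //; first by rewrite Hc -cat_rcons.
  by rewrite /= Hr subst_cons -catA.
- exists (rcons p c), s; split=> //; first by rewrite Hc cat_rcons.
  by rewrite /= -cats1 catA Hl -cats1 subst_cat subst1 -!catA.
Qed.

Lemma no_left_sync_past_center V p v' c w' Z : w' <> [::] ->
  tau c = v' ++ c :: w' -> V ++ p = subst tau p ++ v' ->
  V ++ p ++ c :: Z <> subst tau (p ++ c :: Z).
Proof.
move=> Hw Ec Ep; rewrite subst_cat subst_cons Ec catA Ep -!catA.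
move=> /catsI /catsI [] E.
by have [] := @subst_infix_self_wings w' Z [::]; rewrite ?cats0.
Qed.

Lemma no_right_sync_before_center W s v' c w' Z : v' <> [::] ->
  tau c = v' ++ c :: w' -> s ++ W = w' ++ subst tau s ->
  (Z ++ c :: s) ++ W <> subst tau (Z ++ c :: s).
Proof.
move=> Hv Ec Es; rewrite subst_cat subst_cons Ec -!catA /= Es catA => /catIs E.
by have [] := @subst_infix_self_wings [::] Z v'.
Qed.

Lemma basic_of_tau_ends v a b w : generator tau (v, [:: a; b], w) ->
  tau a = v ++ [:: a] -> tau b = b :: w -> basic tau (v, [:: a; b], w).
Proof.
move=> Hg Ea Eb; split=> // [[[[v' u'] w'] [Hg' [[[[V U] W] [_ [R1 R2]]] Hs]]]].
case: u' Hs Hg' R2 => [|c [|? ?]] // _ Hg' R2; first by case: Hg' => _ [].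
have [p1 [s1 [/= C1 L1 R1']]] := ext_reach_frame R1.
have [p2 [s2 [/= C2 L2 R2']]] := ext_reach_frame R2.
have [Hv' [_ [Hw' [_ He']]]] := Hg'; rewrite /= subst1 in He'.
have HP : V ++ rcons p1 a = subst tau (rcons p1 a).
  by rewrite -cats1 subst_cat subst1 Ea catA L1 -catA.
have HQ : (b :: s1) ++ W = subst tau (b :: s1) by rewrite subst_cons Eb /= R1'.
have HU : rcons p1 a ++ b :: s1 = p2 ++ c :: s2 by rewrite -C2 C1 cat_rcons.
case: (cat_eq_cat_cons HU) => [[Z [EP _]]|[Z [EQ _]]].
- by apply: (no_left_sync_past_center (Z := Z) Hw' He' L2); rewrite -EP.
- by apply: (no_right_sync_before_center (Z := Z) Hv' He' R2'); rewrite -EQ.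
Qed.

End Generators.

Theorem mainTheorem3 (A : finType) (hA : 0 < #|A|) (tau : A -> seq A)
  (htau : is_substitution tau) (hprim : primitive tau) :
  (forall g : triple A, generator tau g -> size (center g) = 1 -> basic tau g) /\
  (forall (v w : seq A) (a b : A), v <> [::] -> w <> [::] ->
     generator tau (v, [:: a; b], w) ->
     (basic tau (v, [:: a; b], w) <-> tau a = v ++ [:: a] /\ tau b = b :: w)) /\
  (forall g : triple A, generator tau g -> 3 <= size (center g) -> ~ basic tau g).
Proof.
split; [|split].
- move=> g Hg Hsz; split=> // [[g' [[_ [Hu _]] [_]]]].
  by rewrite Hsz; case: (center g') Hu.
- move=> v w a b _ _ Hg; split=> [Hb | [Ea Eb]]; last exact: basic_of_tau_ends.
  have [Z [Y [EZ EY]]] := basic_tau_ends (m := [::]) Hb.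
  by case: Z Y EZ EY => [|? ?] [|? ?].
- move=> [[v [|x u]] w] _ //=; case/lastP: u => [|m y] //; rewrite size_rcons => Hsz Hb.
  have [Z [Y [_ _ Em]]] := basic_tau_ends Hb.
  have [EZ EY] := subst_infix_self_wings htau Em; rewrite EZ EY cats0 in Em.
  case: m Hsz Hb Em => [|c m] // _ _ Em.
  exact: primitive_no_fixed_letter hprim (subst_fixed_head htau (esym Em)).
Qed.
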